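(* Let $G$ be a graph on $V$ and $W\subseteq V$ nonempty. Then $W$ is minimally reducible in $G$ if and only if $W$ is the domain of a combinatorial reduction rule applicable to $G$, i.e. either $W=\{v\}$ where $v$ has a loop, or $W=\{v_1,v_2\}$ where $v_1,v_2$ are adjacent loopless vertices, or $W=\{v\}$ where $v$ is loopless and has no neighbors. Consequently the minimal graph reductions of $G$ are exactly the applicable rules $\mathrm{gpr}_v$, $\mathrm{gdr}_{v_1,v_2}$, $\mathrm{gnr}_v$.
   Context: A graph means a finite simple graph in which loops are allowed, with adjacency matrix $A$ over $\mathbf F_2$ ($A_{vv}=1$ iff $v$ has a loop). Let $\mathcal V$ be the $\mathbf F_2$-vector space with basis $V$ and $\mathcal E(x,y)=x^TAy$. For $W\subseteq V$, $\langle W\rangle$ is the span and $\langle W\rangle^{\perp\mathcal E}=\{x:\mathcal E(x,w)=0\ \forall w\in\langle W\rangle\}$. $W$ is reducible in $G$ if $\langle W\rangle+\langle W\rangle^{\perp\mathcal E}=\mathcal V$. A nonempty $W$ is minimally reducible if it is reducible and no nonempty proper subset of it is reducible. The combinatorial reduction rules (with domain ordered first, $R$ the principal submatrix on the other vertices): $\mathrm{gpr}_v$ applies iff $v$ has a loop, $\begin{pmatrix}1&Q\\Q^T&R\end{pmatrix}\mapsto R-Q^TQ$; $\mathrm{gdr}_{v_1,v_2}$ applies iff $v_1,v_2$ are loopless and adjacent, $\begin{pmatrix}J&Q\\Q^T&R\end{pmatrix}\mapsto R-Q^TJQ$, $J=\begin{pmatrix}0&1\\1&0\end{pmatrix}$;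 $\mathrm{gnr}_v$ applies iff $v$ is loopless with no neighbors, $\begin{pmatrix}0&\mathbf 0\\ \mathbf 0^T&R\end{pmatrix}\mapsto R$. *)

From HB Require Import structures.
From mathcomp Require Import all_boot all_order all_algebra.
Set Implicit Arguments. Unset Strict Implicit. Unset Printing Implicit Defensive.
Import GRing.Theory.
Local Open Scope ring_scope.

(* A graph (loops allowed) on V = 'I_n is a symmetric adjacency matrix
   A over F_2; A v v = 1 iff v has a loop.  Vectors of the F_2-space with
   basis V are row vectors 'rV['F_2]_n; the basis vector v is delta_mx 0 v. *)

Definition bform n (A : 'M['F_2]_n) (x y : 'rV['F_2]_n) : 'F_2 :=
  (x *m A *m y^T) 0 0.

Definition spanmx n (W : {set 'I_n}) : 'M['F_2]_n :=
  (\sum_(i in W) <<delta_mx 0 i : 'rV['F_2]_n>>)%MS.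

Definition in_orth n (A : 'M['F_2]_n) (W : {set 'I_n}) (x : 'rV['F_2]_n) : Prop :=
  forall w : 'rV['F_2]_n, (w <= spanmx W)%MS -> bform A x w = 0.

Definition reducible n (A : 'M['F_2]_n) (W : {set 'I_n}) : Prop :=
  forall x : 'rV['F_2]_n, exists y z : 'rV['F_2]_n,
    (y <= spanmx W)%MS /\ in_orth A W z /\ x = y + z.

Definition minimally_reducible n (A : 'M['F_2]_n) (W : {set 'I_n}) : Prop :=
  W != set0 /\ reducible A W /\
  (forall U : {set 'I_n}, U != set0 -> U \proper W -> ~ reducible A U).

From HB Require Import structures.
From mathcomp Require Import all_boot all_order all_algebra.
Local Open Scope ring_scope.
Set Implicit Arguments. Unset Strict Implicit.
Import GRing.Theory.

(* A vector y lies in <W> iff it is supported on W, and z lies in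
   <W>^{perp E} iff the coordinates of zA vanish on W.  Hence W is reducible
   iff for every x some y supported on W has xA and yA agreeing on W
   ([reducibleP]).  Two consequences drive everything:
   - each applicable rule (gpr, gdr, gnr) has a reducible domain, since the
     required y is written down explicitly;
   - if some column v of A restricted to W vanishes on W while A u v = 1 for
     some u, then W is not reducible (test the criterion at x = e_u).
   For a minimally reducible W we then argue by cases: a looped vertex v in W
   forces W = {v}; otherwise an edge v1 v2 inside W forces W = {v1, v2};
   otherwise no vertex of W has any neighbour and W is a single isolated
   vertex.  Conversely singletons are trivially minimal, and the two proper
   subsets of a gdr-domain {v1, v2} are non-reducible singletons. *)

Lemma F2_neq1 (a : 'F_2) : a != 1 -> a = 0.
Proof. by case: a => [[|[|k]]] //= Hk _; apply/val_inj. Qed.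

Section Reducibility.
Variable n : nat.
Implicit Types (A : 'M['F_2]_n) (W U : {set 'I_n}) (x y z w : 'rV['F_2]_n).

Local Notation e i := (delta_mx 0 i : 'rV['F_2]_n).

Definition supported_on y W : Prop := forall j, j \notin W -> y 0 j = 0.

Lemma delta_coord (i j : 'I_n) : e i 0 j = (j == i)%:R.
Proof. by rewrite mxE eqxx. Qed.

Lemma delta_coord_neq (i j : 'I_n) : j != i -> e i 0 j = 0.
Proof. by rewrite delta_coord => /negbTE ->. Qed.

Lemma scale_delta_coord_neq (a : 'F_2) (i j : 'I_n) : j != i -> (a *: e i) 0 j = 0.
Proof. by move=> ji; rewrite mxE delta_coord_neq ?mulr0. Qed.

Lemma span_supportP W w : (w <= spanmx W)%MS <-> supported_on w W.
Proof.
split.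
  move/sub_sumsmxP => [u_ ->] j jW; rewrite summxE; apply: big1 => i iW.
  have /sub_rVP[a ->] : (u_ i *m <<e i>> <= e i)%MS.
    by move: (submxMl (u_ i) <<e i>>%MS); rewrite genmxE.
  by rewrite scale_delta_coord_neq //; apply: contraNneq jW => ->.
move=> supp_w.
have -> : w = \sum_(i in W) w 0 i *: e i.
  apply/rowP => j; rewrite summxE.
  have [jW | jW] := boolP (j \in W).
    rewrite (bigD1 j) //= big1 ?addr0; first by rewrite mxE delta_coord eqxx mulr1.
    by move=> i /andP[_ ij]; rewrite scale_delta_coord_neq // eq_sym.
  rewrite supp_w // big1 // => i iW; rewrite scale_delta_coord_neq //.
  by apply: contraNneq jW => ->.
apply: summx_sub => i iW; apply: scalemx_sub.
by apply: (sumsmx_sup i) => //; rewrite genmxE.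
Qed.

Lemma bformE A x w : bform A x w = \sum_j (x *m A) 0 j * w 0 j.
Proof. by rewrite /bform !mxE; apply: eq_bigr => j _; rewrite [w^T j 0]mxE. Qed.

Lemma bform_delta A x v : bform A x (e v) = (x *m A) 0 v.
Proof.
rewrite bformE (bigD1 v) //= big1 ?addr0; first by rewrite delta_coord eqxx mulr1.
by move=> j jv; rewrite delta_coord_neq ?mulr0.
Qed.

Lemma in_orthP A W z : in_orth A W z <-> forall v, v \in W -> (z *m A) 0 v = 0.
Proof.
split=> [orth_z v vW | zA0 w /span_supportP supp_w].
  rewrite -bform_delta; apply: orth_z; apply/span_supportP => j jW.
  by rewrite delta_coord_neq //; apply: contraNneq jW => ->.
rewrite bformE big1 // => j _.
by have [jW | jW] := boolP (j \in W); [rewrite zA0 // mul0r | rewrite supp_w // mulr0].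
Qed.

(* Reducibility criterion: every xA can be matched on W by some yA with y
   supported on W (then x = y + (x - y) is the required decomposition). *)
Lemma reducibleP A W :
  reducible A W <->
  forall x, exists y, supported_on y W /\
    forall v, v \in W -> (y *m A) 0 v = (x *m A) 0 v.
Proof.
split=> [red x | match_W x].
  have [y [z [/span_supportP supp_y [/in_orthP orth_z ->]]]] := red x.
  exists y; split=> // v vW.
  by rewrite mulmxDl [RHS]mxE orth_z // addr0.
have [y [supp_y yA_W]] := match_W x.
exists y, (x - y); split; first exact/span_supportP.
split; last by rewrite addrC subrK.
apply/in_orthP => v vW; move: (yA_W v vW).
by rewrite mulmxBl !mxE => ->; rewrite subrr.
Qed.

(* If column v of A vanishes on W but A u v = 1, then no y supported on W
   can match e_u A at v, so W is not reducible. *)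
Lemma not_reducible_zero_column A W v u :
  v \in W -> A u v = 1 -> (forall i, i \in W -> A i v = 0) -> ~ reducible A W.
Proof.
move=> vW Auv col0 /reducibleP/(_ (e u))[y [supp_y /(_ v vW)]].
have -> : (y *m A) 0 v = 0.
  rewrite mxE big1 // => i _.
  by have [iW | iW] := boolP (i \in W); [rewrite col0 // mulr0 | rewrite supp_y // mul0r].
by rewrite -rowE mxE Auv => /eqP; rewrite eq_sym oner_eq0.
Qed.

Lemma minimal_reducible_eq A W U : minimally_reducible A W ->
  U \subset W -> U != set0 -> reducible A U -> U = W.
Proof.
move=> [_ [_ minW]] UW U0 redU; apply/eqP; apply: contraT => UneW.
by case: (minW U U0); rewrite // properEneq UneW.
Qed.

Lemma set1_neq0 (v : 'I_n) : [set v] != set0.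
Proof. by apply/set0Pn; exists v; rewrite inE. Qed.

Lemma singleton_minimal A v : reducible A [set v] -> minimally_reducible A [set v].
Proof.
move=> red; split; first exact: set1_neq0.
split=> // U U0; rewrite properEneq subset1 => /andP[UneW /orP[] /eqP U_eq].
  by rewrite U_eq eqxx in UneW.
by rewrite U_eq eqxx in U0.
Qed.

End Reducibility.

Section SymmetricGraph.
Variables (n : nat) (A : 'M['F_2]_n).
Hypothesis symmetric_A : A^T = A.

Local Notation e i := (delta_mx 0 i : 'rV['F_2]_n).

Lemma adj_sym i j : A i j = A j i.
Proof. by rewrite -{1}symmetric_A mxE. Qed.

Lemma scale_delta_mulE (a : 'F_2) (i j : 'I_n) : ((a *: e i) *m A) 0 j = a * A i j.
Proof. by rewrite -scalemxAl -rowE !mxE. Qed.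

(* Domain of gpr_v: y = (xA)_v e_v matches xA at v. *)
Lemma gpr_reducible v : A v v = 1 -> reducible A [set v].
Proof.
move=> Avv; apply/reducibleP => x; exists ((x *m A) 0 v *: e v); split.
  by move=> j; rewrite inE => jv; rewrite scale_delta_coord_neq.
by move=> w; rewrite inE => /eqP ->; rewrite scale_delta_mulE Avv mulr1.
Qed.

(* Domain of gdr_{v1,v2}: the 2x2 block J is its own inverse. *)
Lemma gdr_reducible v1 v2 : A v1 v1 = 0 -> A v2 v2 = 0 -> A v1 v2 = 1 ->
  reducible A [set v1; v2].
Proof.
move=> A11 A22 A12; have A21 : A v2 v1 = 1 by rewrite adj_sym.
apply/reducibleP => x.
exists ((x *m A) 0 v2 *: e v1 + (x *m A) 0 v1 *: e v2); split.
  move=> j; rewrite !inE negb_or => /andP[j1 j2].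
  by rewrite mxE !scale_delta_coord_neq ?addr0.
move=> w; rewrite !inE => /orP[] /eqP ->; rewrite mulmxDl mxE !scale_delta_mulE.
  by rewrite A11 A21 mulr0 mulr1 add0r.
by rewrite A12 A22 mulr0 mulr1 addr0.
Qed.

(* Domain of gnr_v: column v of A is zero, so y = 0 works. *)
Lemma gnr_reducible v : A v v = 0 -> (forall u, u != v -> A v u = 0) ->
  reducible A [set v].
Proof.
move=> Avv isolated_v; apply/reducibleP => x; exists 0; split.
  by move=> j _; rewrite mxE.
move=> w; rewrite inE => /eqP ->; rewrite mul0mx mxE mxE big1 // => i _.
have [-> | iv] := eqVneq i v; first by rewrite Avv mulr0.
by rewrite adj_sym isolated_v ?mulr0.
Qed.

Lemma not_reducible_loopless_neighbour v u : A v v = 0 -> A v u = 1 ->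
  ~ reducible A [set v].
Proof.
move=> Avv Avu; apply: (not_reducible_zero_column (u := u) (set11 v)).
  by rewrite adj_sym.
by move=> i; rewrite inE => /eqP ->.
Qed.

(* The domain of an applicable gdr is minimally reducible: its proper
   nonempty subsets are singletons {w} with w loopless and adjacent to the
   other vertex. *)
Lemma gdr_minimal v1 v2 : v1 != v2 -> A v1 v1 = 0 -> A v2 v2 = 0 -> A v1 v2 = 1 ->
  minimally_reducible A [set v1; v2].
Proof.
move=> ne A11 A22 A12; split; first by apply/set0Pn; exists v1; rewrite !inE eqxx.
split; first exact: gdr_reducible.
move=> U U0 UW; have := proper_card UW; rewrite cards2 ne => card_U.
have /cards1P[w U_eq] : #|U| == 1%N.
  by rewrite eqn_leq -ltnS card_U lt0n cards_eq0 U0.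
have := proper_sub UW; rewrite {}U_eq sub1set !inE => /orP[] /eqP ->.
  exact: not_reducible_loopless_neighbour A12.
by apply: (not_reducible_loopless_neighbour (u := v1) A22); rewrite adj_sym.
Qed.

Lemma minimal_with_loop W v : minimally_reducible A W ->
  v \in W -> A v v = 1 -> W = [set v].
Proof.
move=> minW vW Avv; symmetry; apply: (minimal_reducible_eq minW).
- by rewrite sub1set.
- exact: set1_neq0.
- exact: gpr_reducible.
Qed.

Lemma minimal_with_edge W v1 v2 : minimally_reducible A W ->
  (forall v, v \in W -> A v v = 0) -> v1 \in W -> v2 \in W -> A v1 v2 = 1 ->
  v1 != v2 /\ W = [set v1; v2].
Proof.
move=> minW loopless v1W v2W A12.
have ne : v1 != v2.
  by apply/eqP => v1_eq; move: A12; rewrite -v1_eq loopless // => /eqP; rewrite eq_sym oner_eq0.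
split=> //; symmetry; apply: (minimal_reducible_eq minW).
- by rewrite subUset !sub1set v1W v2W.
- by apply/set0Pn; exists v1; rewrite !inE eqxx.
- by apply: gdr_reducible; rewrite ?loopless.
Qed.

(* A minimally reducible set spanning no edge (loops included) consists of a
   single vertex without neighbours: a neighbour u of some v in W would make
   column v vanish on W while A u v = 1. *)
Lemma minimal_without_edge W : minimally_reducible A W ->
  (forall i j, i \in W -> j \in W -> A i j = 0) ->
  exists v, [/\ W = [set v], A v v = 0 & forall u, u != v -> A v u = 0].
Proof.
move=> minW no_edge.
have isolated v u : v \in W -> A v u = 0.
  move=> vW; apply: F2_neq1; apply/negP => /eqP Avu.
  apply: (not_reducible_zero_column (u := u) vW) minW.2.1; first by rewrite adj_sym.
  by move=> i iW; apply: no_edge.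
have [v vW] := set0Pn _ minW.1.
exists v; split; [symmetry | exact: isolated | by move=> u _; apply: isolated].
apply: (minimal_reducible_eq minW); rewrite ?sub1set ?set1_neq0 //.
by apply: gnr_reducible => [|u _]; apply: isolated.
Qed.

End SymmetricGraph.

Theorem mainTheorem9 (n : nat) (A : 'M['F_2]_n) (hA : A^T = A)
    (W : {set 'I_n}) (hW : W != set0) :
  minimally_reducible A W <->
  [\/ (exists v, W = [set v] /\ A v v = 1),
      (exists v1 v2, [/\ v1 != v2, W = [set v1; v2], A v1 v1 = 0,
                         A v2 v2 = 0 & A v1 v2 = 1])
    | (exists v, [/\ W = [set v], A v v = 0 &
                    forall u, u != v -> A v u = 0])].
Proof.
split=> [minW | [[v [-> Avv]] | [v1 [v2 [ne -> A11 A22 A12]]] | [v [-> Avv iso]]]].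
- have [v /andP[vW /eqP Avv] | no_loop] := pickP [pred v | (v \in W) && (A v v == 1)].
    by apply: Or31; exists v; rewrite (minimal_with_loop minW vW Avv).
  have loopless v : v \in W -> A v v = 0.
    by move=> vW; apply: F2_neq1; have := no_loop v; rewrite /= vW => /negbT.
  have [[v1 v2] /and3P[/= v1W v2W /eqP A12] | no_edge] :=
    pickP [pred p : 'I_n * 'I_n | [&& p.1 \in W, p.2 \in W & A p.1 p.2 == 1]].
    have [ne W_eq] := minimal_with_edge hA minW loopless v1W v2W A12.
    by apply: Or32; exists v1, v2; split; rewrite ?loopless.
  apply/Or33/(minimal_without_edge hA minW) => i j iW jW.
  by apply: F2_neq1; have := no_edge (i, j); rewrite /= iW jW => /negbT.
- exact/singleton_minimal/gpr_reducible.
- exact: gdr_minimal.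
- exact/singleton_minimal/gnr_reducible.
Qed.
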